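(* Let $C(t,p;x)=p+\sum_{n\ge1}x^n\sum_{D\in\mathcal{D}_n}t^{\mathrm{seg}(D)}p^{\mathrm{lseg}(D)}$, and write $C=C(t,p;x)$ and $C(t,1)=C(t,1;x)$. Then $$tp^2x^2C(t,1)^2+px(C-pxC-p)C(t,1)-(C-pxC-p)=0.$$
   Context: A Dyck path of semilength $n$ is a lattice path from $(0,0)$ to $(n,n)$ with east steps $(1,0)$ and north steps $(0,1)$ never passing above $y=x$; encode it as $d_1\cdots d_n$ with $d_i$ the number of north steps before the $i$-th east step. $\mathcal{D}_n$ is the set of these paths. A segment is a maximal string of at least two consecutive east steps of the same height; $\mathrm{seg}(D)$ is the number of segments. $\mathrm{lseg}(D)=i$ if the $i$-th east step is the last step of the leftmost segment of $D$, and $\mathrm{lseg}(D)=n+1$ if $D$ has no segment. *)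

From HB Require Import structures.
From mathcomp Require Import all_boot all_order all_algebra.
Set Implicit Arguments. Unset Strict Implicit. Unset Printing Implicit Defensive.
Import GRing.Theory.

(* A Dyck path of semilength n is encoded as d_1 ... d_n (here 0-indexed:
   d = [:: d_1; ...; d_n] : seq nat), d_i = number of north steps before the
   i-th east step.  Never passing above y = x  <->  d nondecreasing and
   d_i <= i - 1 (1-indexed), i.e. nth 0 d j <= j (0-indexed). *)
Definition is_dyck (n : nat) (d : seq nat) : bool :=
  (size d == n) && sorted leq d && all (fun j => nth 0 d j <= j) (iota 0 n).

(* run-length encoding: list of (height, number of consecutive east steps) *)
Fixpoint rle (s : seq nat) : seq (nat * nat) :=
  match s with
  | [::] => [::]
  | x :: s' =>
    match rle s' with
    | (y, m) :: r => if x == y then (x, m.+1) :: r else (x, 1) :: (y, m) :: r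
    | [::] => [:: (x, 1)]
    end
  end.

(* segments = maximal runs of length >= 2 *)
Definition is_segment (r : nat * nat) : bool := 2 <= r.2.

Definition seg (d : seq nat) : nat := count is_segment (rle d).

(* index (1-based) of the last east step of the leftmost segment; n+1 if none *)
Definition lseg (d : seq nat) : nat :=
  let rs := rle d in
  if has is_segment rs then sumn (take (find is_segment rs).+1 (map snd rs))
  else (size d).+1.

Definition Ccoef (R : comNzRingType) (t p : R) (n : nat) : R :=
  if n == 0 then p
  else (\sum_(D : n.-tuple 'I_n | is_dyck n (map val D))
          t ^+ seg (map val D) * p ^+ lseg (map val D))%R.

Definition Ctrunc (R : comNzRingType) (t p : R) (N : nat) : {poly R} :=
  \poly_(i < N) Ccoef t p i.

From mathcomp Require Import all_boot all_order all_algebra.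
From mathcomp Require Import zify ring.
Set Implicit Arguments. Unset Strict Implicit. Unset Printing Implicit Defensive.
Import GRing.Theory.

(* Let F = C(t,1), and let W_h ([seg_weight]) count, by semilength and t^seg,
   the paths that stay weakly below the line y = x + h, so that W_0 = F.
   Cutting such a path at its first east step strictly above the diagonal
   gives W_(h+1) = F W_h, hence W_h = F^(h+1).  A Dyck path of positive
   semilength starts with a run of k+1 east steps at height 0, followed by a
   path, raised by one, that stays below y = x + k.  A run of length one only
   shifts lseg by one, while a longer run is the leftmost segment; hence, with
   y = pxF,
     C = p + pxC + sum_(k>=2) t p^k x^k F^k = p + pxC + t y^2 / (1 - y).
   So B = C - pxC - p satisfies t y^2 + yB - B = 0.  Modulo x^N, B agrees with
   the partial sum S of sum_(k>=2) t y^k, and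
   t y^2 + yB - B = (y - 1)(B - S) + t y^(N+2). *)

Lemma allpairs_uniq_in (S T U : eqType) (f : S -> T -> U) (s : seq S) (t : S -> seq T) :
    uniq s -> {in s, forall x, uniq (t x)} ->
    (forall x x' y y', x \in s -> x' \in s -> y \in t x -> y' \in t x' ->
       f x y = f x' y' -> x = x' /\ y = y') ->
  uniq [seq f x y | x <- s, y <- t x].
Proof.
move=> us ut inj; apply: allpairs_uniq_dep => // -[x y] [x' y'].
move=> /allpairsPdep[x1 [y1 [sx1 ty1 [-> ->]]]] /allpairsPdep[x2 [y2 [sx2 ty2 [-> ->]]]] /=.
by case/inj => // -> ->.
Qed.

(* The heights [d] are nondecreasing and at least [lo], and the j-th one
   (counting from 0) is at most [j + h]: the path stays weakly below y = x + h. *)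
Fixpoint below (h lo : nat) (d : seq nat) : bool :=
  if d is x :: d' then [&& lo <= x, x <= h & below h.+1 x d'] else true.

Lemma belowE h lo d :
  below h lo d = path leq lo d && all (fun j => nth 0 d j <= j + h) (iota 0 (size d)).
Proof.
elim: d h lo => //= x d IH h lo.
rewrite IH -[iota 1 _]/(iota (1 + 0) _) iotaDl all_map add0n.
rewrite (eq_all (a2 := fun j => nth 0 d j <= j + h.+1)) => [|j]; last by rewrite /= add1n addSnnS.
by case: (lo <= x); case: (x <= h); case: (path leq x d).
Qed.

Lemma is_dyckE n d : is_dyck n d = (size d == n) && below 0 0 d.
Proof.
rewrite /is_dyck belowE -andbA; case: eqP => //= <-.
by rewrite (eq_all (a2 := fun j => nth 0 d j <= j)) => [|j]; rewrite ?addn0 //; case: d.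
Qed.

Lemma below_nth h lo d j : below h lo d -> j < size d -> nth 0 d j <= j + h.
Proof. by rewrite belowE => /andP[_ /allP bd] jd; apply: bd; rewrite mem_iota. Qed.

Lemma below_lt h lo d x : below h lo d -> x \in d -> x < h + size d.
Proof.
move=> bd /(nthP 0)[j jd <-].
by apply: leq_ltn_trans (below_nth bd jd) _; rewrite addnC ltn_add2l.
Qed.

Lemma below_ge h lo d x : below h lo d -> x \in d -> lo <= x.
Proof.
elim: d h lo => //= y d IH h lo /and3P[ly _ bd]; rewrite inE => /predU1P[-> //|].
by move/(IH _ _ bd); apply: leq_trans.
Qed.

Lemma below_shift c h lo d : below (c + h) (c + lo) (map (addn c) d) = below h lo d.
Proof. by elim: d h lo => //= x d IH h lo; rewrite !leq_add2l -addnS IH. Qed.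

Lemma below_succ h lo d : below h.+1 lo.+1 (map succn d) = below h lo d.
Proof. by elim: d h lo => //= x d IH h lo; rewrite !ltnS IH. Qed.

Lemma below_weaken h h' lo lo' d : h <= h' -> lo' <= lo -> below h lo d -> below h' lo' d.
Proof.
elim: d h h' lo lo' => //= x d IH h h' lo lo' hh ll /and3P[lx xh bd].
by rewrite (leq_trans ll lx) (leq_trans xh hh) (IH h.+1 _ x x).
Qed.

Lemma below_cat h lo a b :
  below h lo (a ++ b) = below h lo a && below (h + size a) (last lo a) b.
Proof.
elim: a h lo => /= [|x a IH] h lo; first by rewrite addn0.
by rewrite IH addSnnS !andbA.
Qed.

Lemma below_nseq0 h k : below h 0 (nseq k 0).
Proof. by elim: k h => //= k IH h; rewrite IH. Qed.

Fixpoint paths (h lo m : nat) : seq (seq nat) :=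
  if m is m'.+1 then [seq x :: d | x <- iota lo (h.+1 - lo), d <- paths h.+1 x m']
  else [:: [::]].

Lemma mem_paths h lo m d : (d \in paths h lo m) = (size d == m) && below h lo d.
Proof.
elim: m h lo d => [|m IH] h lo [|x d] //=.
  by apply/allpairsPdep => -[y [e [_ _ //]]].
apply/allpairsPdep/idP => [[y [e [+ + [-> ->]]]]|/and4P[/eqP[sd] lx xh bd]].
  by rewrite mem_iota IH eqSS => /andP[ly yh] /andP[-> ->]; rewrite ly andbT; lia.
by exists x, d; rewrite mem_iota IH sd eqxx bd; split => //; lia.
Qed.

Lemma uniq_paths h lo m : uniq (paths h lo m).
Proof.
elim: m h lo => //= m IH h lo.
by apply: allpairs_uniq_in => [||x x' d d' _ _ _ _ [-> ->]]; rewrite ?iota_uniq.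
Qed.

Lemma rle_cons x s : exists m r, rle (x :: s) = (x, m.+1) :: r.
Proof.
elim: s x => [|y s IH] x; first by exists 0, [::].
have [m [r E]] := IH y; rewrite /= -/(rle (y :: s)) E.
by case: eqP => [->|_]; [exists m.+1, r | exists 0, ((y, m.+1) :: r)].
Qed.

Lemma rle_cat a b : {in a & b, forall x y, x != y} -> rle (a ++ b) = rle a ++ rle b.
Proof.
elim: a => //= x a IH ab; rewrite IH => [|u v ua vb]; last by apply: ab; rewrite // inE ua orbT.
case: a {IH} ab => [|z a] ab /=.
  case: b ab => [|y b] ab //=; have [m [r E]] := rle_cons y b.
  by rewrite -/(rle (y :: b)) E (negbTE (ab x y (mem_head _ _) (mem_head _ _))).
by have [m [r E]] := rle_cons z a; rewrite -/(rle (z :: a)) E /=; case: (x == z).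
Qed.

Lemma rle_map f s : injective f -> rle (map f s) = [seq (f r.1, r.2) | r <- rle s].
Proof.
move=> inj_f; elim: s => //= x s ->.
by case: (rle s) => //= -[y m] r; rewrite inj_eq //; case: (x == y).
Qed.

Lemma rle_nseq k x : rle (nseq k.+1 x) = [:: (x, k.+1)].
Proof. by elim: k => //= k; rewrite -/(rle (nseq k.+1 x)) /= => ->; rewrite eqxx. Qed.

Lemma seg_cat a b : {in a & b, forall x y, x != y} -> seg (a ++ b) = seg a + seg b.
Proof. by move=> ab; rewrite /seg rle_cat // count_cat. Qed.

Lemma seg_map f s : injective f -> seg (map f s) = seg s.
Proof. by move=> inj_f; rewrite /seg rle_map // count_map. Qed.

Lemma rle_zero_run k e :
  rle (nseq k.+1 0 ++ map succn e) = (0, k.+1) :: [seq (r.1.+1, r.2) | r <- rle e].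
Proof.
rewrite rle_cat ?rle_nseq ?rle_map //; first exact: succn_inj.
by move=> x y /nseqP[-> _] /mapP[z _ ->].
Qed.

Lemma seg_zero_run k e : seg (nseq k.+1 0 ++ map succn e) = (0 < k) + seg e.
Proof. by rewrite /seg rle_zero_run /= count_map. Qed.

Lemma lseg_zero_run k e :
  lseg (nseq k.+1 0 ++ map succn e) = if 0 < k then k.+1 else (lseg e).+1.
Proof.
rewrite /lseg rle_zero_run /=; case: k => [|k] /=; last by rewrite take0 addn0.
rewrite has_map find_map -map_comp (eq_has (a2 := is_segment)) //.
by rewrite (eq_find (a2 := is_segment)) // (eq_map (g := snd)) // size_map; case: ifP.
Qed.

Lemma below_first_exit h a lo d : below (h.+1 + a) lo d -> lo <= a ->
  exists Q e, [/\ below a lo Q, below h 0 e & d = Q ++ map (addn (a + size Q).+1) e].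
Proof.
elim: d a lo => [|x d IH] a lo; first by exists [::], [::].
move=> /= /and3P[lx xh bd] la; case: (leqP x a) => xa.
  have bd' : below (h.+1 + a.+1) x d by rewrite addnS.
  have [Q [e [bQ be ->]]] := IH a.+1 x bd' (leqW xa).
  by exists (x :: Q), e; split => //=; rewrite ?lx ?xa ?addSnnS.
have ge_xd y : y \in x :: d -> a < y.
  by rewrite inE => /predU1P[-> //|/(below_ge bd)]; apply: leq_trans.
exists [::], (map (subn^~ a.+1) (x :: d)).
have -> : map (addn (a + 0).+1) (map (subn^~ a.+1) (x :: d)) = x :: d.
  by rewrite addn0 -map_comp map_id_in // => y /ge_xd /= /subnKC.
split=> //; rewrite -(below_shift a.+1) addn0.
have -> : map (addn a.+1) (map (subn^~ a.+1) (x :: d)) = x :: d.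
  by rewrite -map_comp map_id_in // => y /ge_xd /= /subnKC.
by rewrite /= xa addSnnS addnC xh.
Qed.

Definition glue (Q e : seq nat) := Q ++ map (addn (size Q).+1) e.

Lemma size_glue Q e : size (glue Q e) = size Q + size e.
Proof. by rewrite size_cat size_map. Qed.

Lemma glue_inj Q Q' e e' : below 0 0 Q -> below 0 0 Q' ->
  glue Q e = glue Q' e' -> Q = Q' /\ e = e'.
Proof.
wlog le_QQ' : Q Q' e e' / size Q <= size Q'.
  move=> wlog bQ bQ' E; case: (leqP (size Q) (size Q')) => [|/ltnW] le.
    exact: wlog.
  by have [] := wlog _ _ _ _ le bQ' bQ (esym E).
move=> bQ bQ' E; case: (ltngtP (size Q) (size Q')) => [lt|gt|eqQQ']; first last.
- move/eqP: E; rewrite /glue eqQQ' eqseq_cat //.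
  by case/andP => /eqP -> /eqP /(inj_map (@addnI _)) ->.
- by move: le_QQ'; rewrite leqNgt gt.
case: e E => [|x e] E.
  by have := congr1 size E; rewrite !size_glue /= => Es; exfalso; lia.
have := congr1 (nth 0 ^~ (size Q)) E; rewrite /glue nth_cat ltnn subnn /= nth_cat lt.
by move=> Ex; have := below_nth bQ' lt; rewrite -Ex addn0 addSn ltnNge leq_addr.
Qed.

Lemma seg_glue Q e : below 0 0 Q -> seg (glue Q e) = seg Q + seg e.
Proof.
move=> bQ; rewrite seg_cat ?seg_map //; first exact: addnI.
move=> x _ /(below_lt bQ) xQ /mapP[y _ ->]; rewrite neq_ltn.
by rewrite (leq_trans xQ) // add0n addSn leqW // leq_addr.
Qed.

Lemma perm_paths_first_exit h m :
  perm_eq (paths h.+1 0 m) [seq glue qe.1 qe.2 | i <- iota 0 m.+1,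
                            qe <- [seq (Q, e) | Q <- paths 0 0 i, e <- paths h 0 (m - i)]].
Proof.
apply: uniq_perm; first exact: uniq_paths.
  apply: allpairs_uniq_in => [||i i' [Q e] [Q' e'] _ _]; first exact: iota_uniq.
    by move=> i _; apply: allpairs_uniq_in => [||Q Q' e e' _ _ _ _ [-> ->]]; rewrite ?uniq_paths.
  move=> /allpairsP[[Q1 e1] [/= + _ [-> ->]]] /allpairsP[[Q2 e2] [/= + _ [-> ->]]].
  by rewrite !mem_paths => /andP[/eqP <- bQ] /andP[/eqP <- bQ'] /glue_inj[] // -> ->.
move=> d; rewrite mem_paths; apply/idP/allpairsPdep => [/andP[/eqP sd bd]|].
  rewrite -[h.+1]addn0 in bd; have [Q [e [bQ be]]] := below_first_exit bd (leqnn 0).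
  rewrite add0n -/(glue Q e) => Ed; rewrite {}Ed size_glue in sd *.
  exists (size Q), (Q, e); split=> //; first by rewrite mem_iota ltnS -sd leq_addr.
  by apply/allpairsP; exists (Q, e); rewrite !mem_paths -sd addKn !eqxx bQ be.
move=> [i [_ [+ /allpairsP[[Q e] [/= + + ->]] ->]]] /=.
rewrite mem_iota ltnS !mem_paths => im /andP[/eqP sQ bQ] /andP[/eqP se be].
rewrite size_glue se -sQ subnKC ?eqxx ?sQ //= {im sQ se}.
have last_le : last 0 Q <= size Q.
  case/lastP: Q bQ => //= Q x bQ; have xQ : x \in rcons Q x by rewrite mem_rcons mem_head.
  by rewrite last_rcons ltnW //; have := below_lt bQ xQ; rewrite size_rcons.
rewrite /glue below_cat (below_weaken _ _ bQ) //=.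
apply: (@below_weaken ((size Q).+1 + h) _ ((size Q).+1 + 0)); rewrite ?below_shift //.
  by rewrite addSnnS addnC.
by rewrite addn0 (leq_trans last_le).
Qed.

Lemma below_zero_run h d : below h.+1 0 d ->
  exists k e, d = nseq k 0 ++ map succn e /\ below (h + k) 0 e.
Proof.
elim: d h => [|x d IH] h; first by exists 0, [::].
case: x => [|x] /and3P[_ xh bd].
  by have [k [e [-> be]]] := IH h.+1 bd; exists k.+1, e; rewrite -addSnnS.
have Ed : map succn (map predn (x.+1 :: d)) = x.+1 :: d.
  rewrite -map_comp map_id_in // => y; rewrite inE => /predU1P[-> //|].
  by move=> /(below_ge bd) /(leq_trans (ltn0Sn x)) /prednK.
exists 0, (map predn (x.+1 :: d)); split; first by rewrite Ed.
by rewrite addn0 -below_succ Ed /= xh; exact: bd.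
Qed.

Lemma zero_run_inj k k' e e' :
  nseq k 0 ++ map succn e = nseq k' 0 ++ map succn e' -> k = k' /\ e = e'.
Proof.
have find_run j s : find (leq 1) (nseq j 0 ++ map succn s) = j.
  by rewrite find_cat has_nseq andbF size_nseq; case: s => [|? ?]; rewrite /= addn0.
move=> E; have ekk' : k = k' by rewrite -(find_run k e) E find_run.
by move/eqP: E; rewrite ekk' eqseq_cat ?size_nseq // => /andP[_ /eqP /(inj_map succn_inj)].
Qed.

Lemma perm_paths_zero_run n :
  perm_eq (paths 0 0 n.+1)
          [seq nseq k.+1 0 ++ map succn e | k <- iota 0 n.+1, e <- paths k 0 (n - k)].
Proof.
apply: uniq_perm; first exact: uniq_paths.
  apply: allpairs_uniq_in => [||k k' e e' _ _ _ _ /zero_run_inj[[->] ->] //].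
    exact: iota_uniq.
  by move=> k _; apply: uniq_paths.
move=> d; rewrite mem_paths; apply/idP/allpairsPdep => [|[k [e [+ + ->]]]].
  case: d => [|x d] // /andP[/eqP[sd] /and3P[_ + bd]]; rewrite leqn0 => /eqP x0; subst x.
  have [k [e [Ed be]]] := below_zero_run bd; rewrite Ed size_cat size_nseq size_map in sd.
  rewrite add0n in be; exists k, e.
  by rewrite Ed mem_iota mem_paths -sd addKn eqxx add0n ltnS leq_addr be.
rewrite mem_iota ltnS mem_paths => kn /andP[/eqP se be].
rewrite size_cat size_nseq size_map se addSn subnKC // eqxx /= below_cat below_nseq0 size_nseq.
have -> : last 0 (nseq k 0) = 0 by elim: (k).
by apply: (@below_weaken (1 + k) _ 1); rewrite ?below_succ.
Qed.

Local Open Scope ring_scope.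

Definition seg_weight (R : comNzRingType) (t : R) (h m : nat) : R :=
  \sum_(d <- paths h 0 m) t ^+ seg d.

Definition dyck_weight (R : comNzRingType) (t p : R) (m : nat) : R :=
  \sum_(d <- paths 0 0 m) t ^+ seg d * p ^+ lseg d.

Section Weights.
Variables (R : comNzRingType) (t : R).

Lemma dyck_weight1 m : dyck_weight t 1 m = seg_weight t 0 m.
Proof. by apply: eq_bigr => d _; rewrite expr1n mulr1. Qed.

Lemma big_dyck_tuple (F : seq nat -> R) n :
  \sum_(D : n.+1.-tuple 'I_n.+1 | is_dyck n.+1 (map val D)) F (map val D) =
  \sum_(d <- paths 0 0 n.+1) F d.
Proof.
rewrite -big_filter -(big_map (fun D : n.+1.-tuple 'I_n.+1 => map val D) xpredT F).
apply/perm_big/uniq_perm; last 1 first.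
- move=> d; rewrite mem_paths -is_dyckE; apply/mapP/idP => [[D]|dyck_d].
    by rewrite mem_filter => /andP[+ _] ->.
  move: (dyck_d); rewrite is_dyckE => /andP[/eqP sd bd].
  have inordK_d : map val (map (@inord n) d) = d.
    by rewrite -map_comp map_id_in // => x /(below_lt bd); rewrite sd => /inordK.
  have sd' : size (map (@inord n) d) == n.+1 by rewrite size_map sd.
  by exists (Tuple sd'); rewrite //= mem_filter mem_index_enum andbT /= inordK_d.
- by rewrite map_inj_uniq ?filter_uniq ?index_enum_uniq // => D D' /(inj_map val_inj) /val_inj.
- exact: uniq_paths.
Qed.

Lemma Ccoef_dyck_weight p n : Ccoef t p n = dyck_weight t p n.
Proof.
case: n => [|n]; last exact: big_dyck_tuple.
by rewrite /dyck_weight big_seq1 /lseg /= mul1r expr1.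
Qed.

Lemma seg_weight_first_exit h m :
  seg_weight t h.+1 m = \sum_(i < m.+1) seg_weight t 0 i * seg_weight t h (m - i).
Proof.
rewrite /seg_weight (perm_big _ (perm_paths_first_exit h m)) big_allpairs_dep.
rewrite -[iota 0 m.+1]/(index_iota 0 m.+1) big_mkord; apply: eq_bigr => i _.
rewrite big_allpairs /= big_distrl; apply: eq_big_seq => Q; rewrite mem_paths => /andP[_ bQ].
by rewrite big_distrr; apply: eq_bigr => e _; rewrite seg_glue // exprD.
Qed.

Lemma dyck_weight_zero_run p n :
  dyck_weight t p n.+1 =
  p * dyck_weight t p n + \sum_(k < n) t * p ^+ k.+2 * seg_weight t k.+1 (n - k.+1).
Proof.
rewrite /dyck_weight (perm_big _ (perm_paths_zero_run n)) big_allpairs_dep.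
rewrite -[iota 0 n.+1]/(0 :: iota (1 + 0) n) iotaDl big_cons big_map subn0 big_distrr.
rewrite [iota 0 n](_ : _ = index_iota 0 n) ?big_mkord; last by rewrite /index_iota subn0.
congr (_ + _).
  by apply: eq_bigr => e _; rewrite seg_zero_run lseg_zero_run exprS mulrCA.
apply: eq_bigr => k _; rewrite /seg_weight big_distrr; apply: eq_bigr => e _.
by rewrite add1n seg_zero_run lseg_zero_run /= add1n exprS mulrAC.
Qed.

End Weights.

Lemma coefM_eq0r (R : nzSemiRingType) (q r : {poly R}) k :
  (forall i, (i <= k)%N -> r`_i = 0) -> (q * r)`_k = 0.
Proof. by move=> r0; rewrite coefM big1 // => i _; rewrite r0 ?mulr0 // leq_subr. Qed.

Section Series.
Variables (R : comNzRingType) (t p : R) (N : nat).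

Let F := Ctrunc t 1 N.
Let y := p *: 'X * F.
Let S := \sum_(k < N) t *: y ^+ k.+2.

Lemma coef_Ctrunc q i : (i < N)%N -> (Ctrunc t q N)`_i = dyck_weight t q i.
Proof. by move=> iN; rewrite coef_poly iN Ccoef_dyck_weight. Qed.

Lemma coef_Ctrunc1X h m : (m < N)%N -> (F ^+ h.+1)`_m = seg_weight t h m.
Proof.
elim: h m => [|h IH] m mN; first by rewrite expr1 coef_Ctrunc // dyck_weight1.
rewrite exprS coefM seg_weight_first_exit; apply: eq_bigr => -[i /= im] _.
by rewrite coef_Ctrunc ?dyck_weight1 ?IH //; apply: leq_ltn_trans mN; rewrite ?leq_subr // -ltnS.
Qed.

Lemma coef_yX k m : (y ^+ k)`_m = if (m < k)%N then 0 else p ^+ k * (F ^+ k)`_(m - k).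
Proof.
by rewrite exprMn exprZn -scalerAl coefZ coefXnM; case: ifP; rewrite ?mulr0.
Qed.

Lemma coef_S n : (n < N)%N -> S`_n = (Ctrunc t p N - p *: 'X * Ctrunc t p N - p%:P)`_n.
Proof.
move=> nN; rewrite coef_sum !coefB coefC -scalerAl coefZ coefXM.
case: n nN => [|n] nN.
  rewrite big1 => [|k _]; last by rewrite coefZ coef_yX mulr0.
  by rewrite coef_poly nN /= mulr0 subr0 subrr.
rewrite /= subr0 !coef_Ctrunc ?(ltnW nN) // dyck_weight_zero_run addrAC subrr add0r.
set w := fun k => t * p ^+ k.+2 * seg_weight t k.+1 (n - k.+1).
rewrite (big_ord_widen N w (ltnW (ltnW nN))) [RHS]big_mkcond; apply: eq_bigr => k _.
rewrite coefZ coef_yX ltnS ltnNge /w.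
case: ltnP => [kn|_]; last by rewrite mulr0.
by rewrite coef_Ctrunc1X ?subSS ?mulrA // (leq_ltn_trans (leq_subr _ _)) 1?ltnW.
Qed.

Lemma residualE B :
  (t * p ^+ 2) *: 'X ^+ 2 * F ^+ 2 + p *: 'X * B * F - B = (y - 1) * (B - S) + t *: y ^+ N.+2.
Proof.
have geom : (y - 1) * S = t%:P * (y ^+ N.+2 - y ^+ 2).
  rewrite /S (eq_bigr (fun k : 'I_N => t%:P * y ^+ 2 * y ^+ k)) => [|k _]; last first.
    by rewrite -mul_polyC -mulrA -exprD add2n.
  by rewrite -big_distrr mulrCA -subrX1 !exprS; ring.
rewrite mulrBr geom /y -!mul_polyC polyCM polyC_exp; ring.
Qed.

End Series.

Theorem lemma4p5 (R : comNzRingType) (t p : R) (N k : nat) :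
  (k < N)%N ->
  let C := Ctrunc t p N in
  let C1 := Ctrunc t 1 N in
  let B := C - p *: 'X * C - p%:P in
  ((t * p ^+ 2) *: 'X ^+ 2 * C1 ^+ 2 + p *: 'X * B * C1 - B)`_k = 0.
Proof.
move=> kN C C1 B; rewrite residualE coefD coefZ coef_yX (ltn_trans kN) // mulr0 addr0.
by apply: coefM_eq0r => i ik; rewrite coefB coef_S ?subrr // (leq_ltn_trans ik kN).
Qed.
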